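(* Let $\mathcal{X}_V,\mathcal{X}_L$ be finite sets with $N_V=|\mathcal{X}_V|$, $N_L=|\mathcal{X}_L|$, let $\mathcal{P}_M$ be a joint distribution on $\mathcal{X}_V\times\mathcal{X}_L$ with everywhere positive marginals $\mathcal{P}_V,\mathcal{P}_L$, and let $\tilde P_M\in\mathbb{R}^{N_V\times N_L}$, $(\tilde P_M)_{x_v,x_l}=\mathcal{P}_M(x_v,x_l)/\sqrt{\mathcal{P}_V(x_v)\mathcal{P}_L(x_l)}$. Let $\tilde P_M=U\Sigma V^\top$ be a singular value decomposition with $r=\min(N_V,N_L)$, $U\in\mathbb{R}^{N_V\times r}$, $V\in\mathbb{R}^{N_L\times r}$ having orthonormal columns and $\Sigma=\mathrm{diag}(\sigma_1,\dots,\sigma_r)$ with $\sigma_1\ge\dots\ge\sigma_r\ge0$. Let $k\le r$ and let $U^k,V^k$ be the submatrices consisting of the first $k$ columns of $U,V$. Consider the loss, over all functions $f_V:\mathcal{X}_V\to\mathbb{R}^k$, $f_L:\mathcal{X}_L\to\mathbb{R}^k$, $$\mathcal{L}_{\rm SCL}(f_V,f_L)=-2\,\mathbb{E}_{(x_v,x_l)\sim\mathcal{P}_M}f_V(x_v)^\top f_L(x_l)+\mathbb{E}_{x_v^-\sim\mathcal{P}_V,\,x_l^-\sim\mathcal{P}_L}\big(f_V(x_v^-)^\top f_L(x_l^-)\big)^2$$ (with $x_v^-,x_l^-$ independent). Then $\mathcal{L}_{\rm SCL}$ attains its minimum at the encoders given, for all $x_v\in\mathcal{X}_V$, $x_l\in\mathcal{X}_L$,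 by $$f^*_V(x_v)=\frac{1}{\sqrt{\mathcal{P}_V(x_v)}}\big(U^k_{x_v}DR\big)^\top,\qquad f^*_L(x_l)=\frac{1}{\sqrt{\mathcal{P}_L(x_l)}}\big(V^k_{x_l}\,\mathrm{diag}(\sigma_1,\dots,\sigma_k)\,D^{-1}R\big)^\top,$$ where $U^k_{x}$ denotes the row of $U^k$ indexed by $x$ (similarly for $V^k$), $D\in\mathbb{R}^{k\times k}$ is an arbitrary invertible diagonal matrix, and $R\in\mathbb{R}^{k\times k}$ is an arbitrary orthogonal matrix.
   Context: The encoders are assumed expressive enough to realize any functions $f_V,f_L$, i.e., the minimization is over all functions. *)

From HB Require Import structures.
From mathcomp Require Import all_boot all_order all_algebra.
Set Implicit Arguments. Unset Strict Implicit. Unset Printing Implicit Defensive.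
Import Order.TTheory GRing.Theory Num.Theory.
Local Open Scope ring_scope.

(* The finite sets X_V, X_L are identified with 'I_NV, 'I_NL. A joint
   distribution is a function P : 'I_NV -> 'I_NL -> R. *)

Definition margV (R : nzRingType) (NV NL : nat) (P : 'I_NV -> 'I_NL -> R)
  (xv : 'I_NV) : R := \sum_(xl < NL) P xv xl.
Definition margL (R : nzRingType) (NV NL : nat) (P : 'I_NV -> 'I_NL -> R)
  (xl : 'I_NL) : R := \sum_(xv < NV) P xv xl.

Definition PtildeM (R : rcfType) (NV NL : nat) (P : 'I_NV -> 'I_NL -> R)
  : 'M[R]_(NV, NL) :=
  \matrix_(i, j) (P i j / Num.sqrt (margV P i * margL P j)).

Definition dotr (R : nzRingType) (k : nat) (a b : 'rV[R]_k) : R :=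
  (a *m b^T) 0 0.

Definition L_SCL (R : nzRingType) (NV NL k : nat) (P : 'I_NV -> 'I_NL -> R)
  (fV : 'I_NV -> 'rV[R]_k) (fL : 'I_NL -> 'rV[R]_k) : R :=
  - 2%:R * (\sum_(xv < NV) \sum_(xl < NL) P xv xl * dotr (fV xv) (fL xl))
  + \sum_(xv < NV) \sum_(xl < NL)
      margV P xv * margL P xl * (dotr (fV xv) (fL xl)) ^+ 2.

Definition firstcols (R : Type) (m r k : nat) (hk : (k <= r)%N)
  (M : 'M[R]_(m, r)) : 'M[R]_(m, k) :=
  \matrix_(i, j) M i (widen_ord hk j).

Definition firstentries (R : Type) (r k : nat) (hk : (k <= r)%N)
  (s : 'rV[R]_r) : 'rV[R]_k := \row_j s 0 (widen_ord hk j).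

From HB Require Import structures.
From mathcomp Require Import all_boot all_order all_algebra.
From mathcomp Require Import lra ring.
Set Implicit Arguments. Unset Strict Implicit. Unset Printing Implicit Defensive.
Import Order.TTheory GRing.Theory Num.Theory.
Local Open Scope ring_scope.

(* Writing F_V, F_L for the encoders stacked as matrices and rescaled row-wise
   by the square roots of the marginals, the loss is
   ||M||^2 - 2 <P~, M> = ||P~ - M||^2 - ||P~||^2 with M = F_V F_L^T, a matrix
   of rank at most k. This is Eckart-Young: if Pi is the orthogonal projector
   onto the column space of F_V (trace at most k), then
   2 <P~, M> - ||M||^2 = 2 <Pi P~, M> - ||M||^2 <= ||Pi P~||^2
   = sum_i sigma_i^2 (U^T Pi U)_ii, and the weights (U^T Pi U)_ii lie in [0, 1]
   and sum to at most k, so this is at most sigma_1^2 + ... + sigma_k^2.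
   The given encoders realise M = U_k diag(sigma_1..sigma_k) V_k^T, for which
   equality holds: D and R cancel in F_V F_L^T. *)

Lemma sum_mul_le_topk (R : realFieldType) r k (e w : 'I_r -> R) : (k <= r)%N ->
  (forall i, 0 <= e i) -> (forall i j : 'I_r, (i <= j)%N -> e j <= e i) ->
  (forall i, 0 <= w i <= 1) -> \sum_i w i <= k%:R ->
  \sum_i e i * w i <= \sum_(i < r | (i < k)%N) e i.
Proof.
move=> hk e_ge0 e_noninc w01 sum_w.
have [t [t_ge0 le_t ge_t]] : exists t : R, [/\ 0 <= t,
    forall i : 'I_r, (i < k)%N -> t <= e i & forall i : 'I_r, (k <= i)%N -> e i <= t].
  have [lt_kr|le_rk] := ltnP k r.
    exists (e (Ordinal lt_kr)); split=> // i hi; apply: e_noninc => //.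
    exact: ltnW.
  by exists 0; split=> // i; rewrite leqNgt (leq_trans (ltn_ord i) le_rk).
have sum_ind : \sum_(i < r) (if (i < k)%N then 1 else 0) = k%:R :> R.
  by rewrite -big_mkcond /= (big_ord_narrow hk) sumr_const card_ord.
(* Termwise, (1_{i<k} - w i) (e i - t) >= 0 for the threshold t = e k (or 0 if k = r). *)
set gap := \sum_(i < r) t * ((if (i < k)%N then 1 else 0) - w i).
have gap_ge0 : 0 <= gap by rewrite /gap -mulr_sumr sumrB sum_ind mulr_ge0 // subr_ge0.
rewrite [X in _ <= X]big_mkcond -subr_ge0 -sumrB; apply: le_trans gap_ge0 _.
apply: ler_sum => i _; have /andP[w_ge0 w_le1] := w01 i.
case: ifP => [/le_t|/negbT]; first by have := e_ge0 i; nra.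
by rewrite -leqNgt => /ge_t; nra.
Qed.

Section TraceInequalities.
Variable R : realFieldType.

Lemma mxtrace_mul_trmx_ge0 m n (Z : 'M[R]_(m, n)) : 0 <= \tr (Z *m Z^T).
Proof.
apply: sumr_ge0 => i _; rewrite mxE; apply: sumr_ge0 => j _.
by rewrite mxE -expr2 sqr_ge0.
Qed.

Lemma trmx_mul_diag_ge0 m n (Z : 'M[R]_(m, n)) i : 0 <= (Z^T *m Z) i i.
Proof. by rewrite mxE; apply: sumr_ge0 => j _; rewrite mxE -expr2 sqr_ge0. Qed.

Lemma rV_mul_trmx_eq0 n (u : 'rV[R]_n) : (u *m u^T) 0 0 = 0 -> u = 0.
Proof.
rewrite mxE => /psumr_eq0P sq_eq0; apply/rowP => j; rewrite mxE.
have /eqP : u 0 j * u^T j 0 = 0.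
  by apply: sq_eq0 => // i _; rewrite mxE -expr2 sqr_ge0.
by rewrite mxE mulf_eq0 orbb => /eqP.
Qed.

Lemma mxtrace_cross_le p q (X Y : 'M[R]_(p, q)) :
  2 * \tr (X *m Y^T) - \tr (Y *m Y^T) <= \tr (X *m X^T).
Proof.
have := mxtrace_mul_trmx_ge0 (X - Y).
rewrite linearB /= mulmxBl !mulmxBr !raddfB /=.
have -> : \tr (Y *m X^T) = \tr (X *m Y^T) by rewrite -mxtrace_tr trmx_mul trmxK.
lra.
Qed.

Lemma gram_unit n m (W : 'M[R]_(n, m)) : row_free W -> W *m W^T \in unitmx.
Proof.
move=> W_free; rewrite -row_free_unit -kermx_eq0; apply/eqP/row_matrixP => i.
rewrite row0; set v := row i _.
have vG0 : v *m (W *m W^T) = 0 by rewrite -row_mul mulmx_ker row0.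
have vW0 : v *m W = 0.
  by apply: rV_mul_trmx_eq0; rewrite trmx_mul mulmxA -(mulmxA v) vG0 mul0mx mxE.
by apply/eqP; rewrite -(mulmx_free_eq0 _ W_free) vW0.
Qed.

End TraceInequalities.

Definition orthoproj (R : pzRingType) n (Pi : 'M[R]_n) := Pi^T = Pi /\ Pi *m Pi = Pi.

Section OrthogonalProjectors.
Variable R : realFieldType.

Lemma orthoprojC n (Pi : 'M[R]_n) : orthoproj Pi -> orthoproj (1%:M - Pi).
Proof.
move=> [PiT PiP]; split; first by rewrite linearB /= trmx1 PiT.
by rewrite mulmxBl !mulmxBr !mul1mx !mulmx1 PiP subrr subr0.
Qed.

Lemma orthoproj_diag_ge0 n m (Pi : 'M[R]_n) (X : 'M[R]_(n, m)) i :
  orthoproj Pi -> 0 <= (X^T *m Pi *m X) i i.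
Proof.
move=> [PiT PiP]; have := trmx_mul_diag_ge0 (Pi *m X) i.
by rewrite trmx_mul PiT mulmxA -(mulmxA _ Pi Pi) PiP.
Qed.

Lemma orthoproj_trace_ge0 n m (Pi : 'M[R]_n) (X : 'M[R]_(m, n)) :
  orthoproj Pi -> 0 <= \tr (X *m Pi *m X^T).
Proof.
move=> [PiT PiP]; have := mxtrace_mul_trmx_ge0 (X *m Pi).
by rewrite trmx_mul PiT mulmxA -(mulmxA _ Pi Pi) PiP.
Qed.

Lemma isometry_orthoproj n r (U : 'M[R]_(n, r)) :
  U^T *m U = 1%:M -> orthoproj (U *m U^T).
Proof.
move=> U_orth; split; first by rewrite trmx_mul trmxK.
by rewrite mulmxA -(mulmxA U) U_orth mulmx1.
Qed.

Lemma orthoproj_compress_diag_le1 n r (Pi : 'M[R]_n) (U : 'M[R]_(n, r)) i :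
  orthoproj Pi -> U^T *m U = 1%:M -> (U^T *m Pi *m U) i i <= 1.
Proof.
move=> /orthoprojC /(orthoproj_diag_ge0 U i) + U_orth.
by rewrite mulmxBr mulmx1 mulmxBl U_orth !mxE eqxx subr_ge0.
Qed.

Lemma orthoproj_compress_trace_le n r (Pi : 'M[R]_n) (U : 'M[R]_(n, r)) :
  orthoproj Pi -> U^T *m U = 1%:M -> \tr (U^T *m Pi *m U) <= \tr Pi.
Proof.
move=> [PiT PiP] /isometry_orthoproj /orthoprojC /(orthoproj_trace_ge0 Pi).
rewrite mulmxBr mulmx1 mulmxBl PiT PiP raddfB /= subr_ge0.
suff -> : \tr (U^T *m Pi *m U) = \tr (Pi *m (U *m U^T) *m Pi) by [].
rewrite [RHS]mxtrace_mulC (mulmxA Pi Pi) PiP mulmxA.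
by rewrite [RHS]mxtrace_mulC mulmxA.
Qed.

Definition rowproj r n (W : 'M[R]_(r, n)) : 'M[R]_n := W^T *m invmx (W *m W^T) *m W.

Section RowSpaceProjector.
Variables (r n : nat) (W : 'M[R]_(r, n)).
Hypothesis W_free : row_free W.
Let gram_W_unit : W *m W^T \in unitmx. Proof. exact: gram_unit. Qed.

Lemma rowproj_orthoproj : orthoproj (rowproj W).
Proof.
rewrite /rowproj; split.
  by rewrite !trmx_mul trmxK trmx_inv trmx_mul trmxK mulmxA.
rewrite -!mulmxA; congr (_ *m _); congr (_ *m _).
by rewrite (mulmxA W) (mulmxA (W *m W^T)) mulmxV // mul1mx.
Qed.

Lemma rowproj_mulmx_id k (A : 'M[R]_(n, k)) : (A^T <= W)%MS -> rowproj W *m A = A.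
Proof.
case/submxP=> X defA; have -> : A = W^T *m X^T by rewrite -trmx_mul -defA trmxK.
by rewrite /rowproj -!mulmxA (mulmxA W) (mulmxA (invmx _)) mulVmx // mul1mx.
Qed.

Lemma mxtrace_rowproj : \tr (rowproj W) = r%:R.
Proof. by rewrite /rowproj mxtrace_mulC mulmxA mulmxV // mxtrace1. Qed.

End RowSpaceProjector.

Lemma orthoproj_colspace_exists m k (A : 'M[R]_(m, k)) :
  exists Pi : 'M[R]_m, [/\ orthoproj Pi, Pi *m A = A & \tr Pi <= k%:R].
Proof.
have W_free := row_base_free A^T.
exists (rowproj (row_base A^T)); split; first exact: rowproj_orthoproj.
  by rewrite rowproj_mulmx_id ?eq_row_base.
by rewrite mxtrace_rowproj // ler_nat mxrank_tr rank_leq_col.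
Qed.
End OrthogonalProjectors.

Definition rV_trunc (R : nmodType) r (k : nat) (s : 'rV[R]_r) : 'rV[R]_r :=
  \row_i (if (i < k)%N then s 0 i else 0).

Section LowRankApproximation.
Variables (R : realFieldType) (n m r : nat).
Variables (U : 'M[R]_(n, r)) (V : 'M[R]_(m, r)) (s : 'rV[R]_r).
Hypotheses (U_orth : U^T *m U = 1%:M) (V_orth : V^T *m V = 1%:M).
Local Notation S := (U *m diag_mx s *m V^T).

Lemma mxtrace_svd_mul (d e : 'rV[R]_r) :
  \tr ((U *m diag_mx d *m V^T) *m (U *m diag_mx e *m V^T)^T) = \sum_i d 0 i * e 0 i.
Proof.
rewrite !trmx_mul trmxK tr_diag_mx -!mulmxA (mulmxA V^T) V_orth mul1mx.
rewrite mxtrace_mulC -!mulmxA U_orth mulmx1; apply: eq_bigr => i _.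
by rewrite mul_diag_mx !mxE eqxx mulr1n.
Qed.

Lemma mxtrace_proj_svd (Pi : 'M[R]_n) : orthoproj Pi ->
  \tr (Pi *m S *m (Pi *m S)^T) = \sum_i s 0 i ^+ 2 * (U^T *m Pi *m U) i i.
Proof.
move=> [PiT PiP].
have SSt : S *m S^T = U *m diag_mx s *m diag_mx s *m U^T.
  by rewrite !trmx_mul trmxK tr_diag_mx -!mulmxA (mulmxA V^T) V_orth mul1mx.
have -> : Pi *m S *m (Pi *m S)^T = Pi *m (U *m diag_mx s *m diag_mx s *m U^T) *m Pi.
  by rewrite trmx_mul PiT -SSt !mulmxA.
rewrite mxtrace_mulC (mulmxA Pi Pi) PiP.
rewrite mulmxA mxtrace_mulC !mulmxA; apply: eq_bigr => i _.
by rewrite !mul_mx_diag !mxE -mulrA mulrC expr2.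
Qed.

Hypotheses (s_ge0 : forall i, 0 <= s 0 i)
  (s_noninc : forall i j : 'I_r, (i <= j)%N -> s 0 j <= s 0 i).

Lemma low_rank_gain_le k (A : 'M[R]_(n, k)) (B : 'M[R]_(m, k)) : (k <= r)%N ->
  2 * \tr (S *m (A *m B^T)^T) - \tr (A *m B^T *m (A *m B^T)^T)
    <= \sum_(i < r | (i < k)%N) s 0 i ^+ 2.
Proof.
move=> hk; have [Pi [Pi_proj PiA trPi]] := orthoproj_colspace_exists A.
have proj_cross : \tr (S *m (A *m B^T)^T) = \tr (Pi *m S *m (A *m B^T)^T).
  have AtPi : A^T *m Pi = A^T by rewrite -{1}(proj1 Pi_proj) -trmx_mul PiA.
  rewrite trmx_mul trmxK !mulmxA [RHS]mxtrace_mulC !mulmxA AtPi.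
  by rewrite [LHS]mxtrace_mulC !mulmxA.
rewrite proj_cross; apply: le_trans (mxtrace_cross_le _ _) _.
rewrite mxtrace_proj_svd //; apply: sum_mul_le_topk => //.
- by move=> i; rewrite sqr_ge0.
- by move=> i j le_ij; rewrite ler_sqr ?nnegrE ?s_noninc.
- by move=> i; rewrite orthoproj_diag_ge0 ?orthoproj_compress_diag_le1.
- exact: le_trans (orthoproj_compress_trace_le Pi_proj U_orth) trPi.
Qed.

Lemma truncated_svd_gain k :
  2 * \tr (S *m (U *m diag_mx (rV_trunc k s) *m V^T)^T)
    - \tr ((U *m diag_mx (rV_trunc k s) *m V^T) *m (U *m diag_mx (rV_trunc k s) *m V^T)^T)
  = \sum_(i < r | (i < k)%N) s 0 i ^+ 2.
Proof.
have trunc_sq (d : 'rV[R]_r) : (forall i : 'I_r, (i < k)%N -> d 0 i = s 0 i) ->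
    \sum_i d 0 i * rV_trunc k s 0 i = \sum_(i < r | (i < k)%N) s 0 i ^+ 2.
  move=> dE; rewrite [RHS]big_mkcond; apply: eq_bigr => i _; rewrite mxE.
  by case: ifP => [/dE ->|_]; rewrite ?mulr0 ?expr2.
have truncE (i : 'I_r) : (i < k)%N -> rV_trunc k s 0 i = s 0 i.
  by rewrite mxE => ->.
rewrite !mxtrace_svd_mul !trunc_sq //; lra.
Qed.

End LowRankApproximation.

Lemma firstcols_diag_mul (R : comPzRingType) n m r k (hk : (k <= r)%N)
    (U : 'M[R]_(n, r)) (V : 'M[R]_(m, r)) (s : 'rV[R]_r) :
  firstcols hk U *m (firstcols hk V *m diag_mx (firstentries hk s))^T
    = U *m diag_mx (rV_trunc k s) *m V^T.
Proof.
apply/matrixP => i j.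
rewrite !mul_mx_diag !mxE [RHS](bigID (fun l : 'I_r => (l < k)%N)) /=.
rewrite [X in _ = _ + X]big1 ?addr0 => [|l /negbTE lk]; last first.
  by rewrite !mxE lk mulr0 mul0r.
rewrite (big_ord_narrow hk); apply: eq_bigr => l _.
by rewrite !mxE ifT //= mulrA mulrAC.
Qed.

Lemma mulmx_diag_orthogonal_cancel (R : comUnitRingType) n m k
    (X : 'M[R]_(n, k)) (Y : 'M[R]_(m, k)) (D Q : 'M[R]_k) :
  is_diag_mx D -> D \in unitmx -> Q^T *m Q = 1%:M ->
  (X *m D *m Q) *m (Y *m invmx D *m Q)^T = X *m Y^T.
Proof.
move=> /diag_mxP[d ->] D_unit Q_orth.
rewrite !trmx_mul trmx_inv tr_diag_mx -!mulmxA (mulmxA Q) (mulmx1C Q_orth) mul1mx.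
by rewrite (mulmxA (diag_mx d)) mulmxV // mul1mx.
Qed.

Section EmbeddingMatrix.
Variable R : rcfType.

Definition embed_mx n k (p : 'I_n -> R) (g : 'I_n -> 'rV[R]_k) : 'M[R]_(n, k) :=
  \matrix_(i, j) (Num.sqrt (p i) * g i 0 j).

Lemma embed_mx_mul_trE n m k (p : 'I_n -> R) (q : 'I_m -> R)
    (g : 'I_n -> 'rV[R]_k) (h : 'I_m -> 'rV[R]_k) i j :
  (embed_mx p g *m (embed_mx q h)^T) i j
    = Num.sqrt (p i) * Num.sqrt (q j) * dotr (g i) (h j).
Proof.
by rewrite /dotr !mxE mulr_sumr; apply: eq_bigr => l _; rewrite !mxE; ring.
Qed.

Lemma embed_mx_rescaled n k (p : 'I_n -> R) (g : 'I_n -> 'rV[R]_k) (M : 'M[R]_(n, k)) :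
  (forall i, 0 < p i) -> (forall i, g i = (Num.sqrt (p i))^-1 *: row i M) ->
  embed_mx p g = M.
Proof.
move=> p_gt0 gE; apply/matrixP => i j.
by rewrite mxE gE !mxE mulrA mulfV ?mul1r // gt_eqF // sqrtr_gt0.
Qed.

Lemma L_SCL_embed_mx NV NL k (P : 'I_NV -> 'I_NL -> R)
    (gV : 'I_NV -> 'rV[R]_k) (gL : 'I_NL -> 'rV[R]_k) :
  (forall xv, 0 < margV P xv) -> (forall xl, 0 < margL P xl) ->
  let M := embed_mx (margV P) gV *m (embed_mx (margL P) gL)^T in
  L_SCL P gV gL = \tr (M *m M^T) - 2 * \tr (PtildeM P *m M^T).
Proof.
move=> PV_gt0 PL_gt0 M; rewrite /L_SCL addrC mulNr; congr (_ - _).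
  apply: eq_bigr => i _; rewrite mxE; apply: eq_bigr => j _.
  rewrite [M^T j i]mxE embed_mx_mul_trE -expr2 !exprMn.
  by rewrite !sqr_sqrtr ?ltW ?PV_gt0 ?PL_gt0.
congr (_ * _); apply: eq_bigr => i _; rewrite mxE; apply: eq_bigr => j _.
rewrite [M^T j i]mxE embed_mx_mul_trE /PtildeM mxE.
by rewrite -sqrtrM ?ltW // mulrA mulfVK // gt_eqF // sqrtr_gt0 mulr_gt0.
Qed.

End EmbeddingMatrix.

Theorem theorem3p2 (R : rcfType) (NV NL : nat) (P : 'I_NV -> 'I_NL -> R)
  (P_ge0 : forall xv xl, 0 <= P xv xl)
  (P_sum1 : \sum_(xv < NV) \sum_(xl < NL) P xv xl = 1)
  (PV_gt0 : forall xv, 0 < margV P xv)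
  (PL_gt0 : forall xl, 0 < margL P xl)
  (U : 'M[R]_(NV, minn NV NL)) (V : 'M[R]_(NL, minn NV NL))
  (sigma : 'rV[R]_(minn NV NL))
  (U_orth : U^T *m U = 1%:M) (V_orth : V^T *m V = 1%:M)
  (sigma_ge0 : forall i, 0 <= sigma 0 i)
  (sigma_noninc : forall i j : 'I_(minn NV NL), (i <= j)%N -> sigma 0 j <= sigma 0 i)
  (svd : PtildeM P = U *m diag_mx sigma *m V^T)
  (k : nat) (hk : (k <= minn NV NL)%N)
  (D : 'M[R]_k) (D_diag : is_diag_mx D) (D_inv : D \in unitmx)
  (Rm : 'M[R]_k) (Rm_orth : Rm^T *m Rm = 1%:M) :
  let fV := fun xv : 'I_NV =>
    (Num.sqrt (margV P xv))^-1 *: (row xv (firstcols hk U) *m D *m Rm) in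
  let fL := fun xl : 'I_NL =>
    (Num.sqrt (margL P xl))^-1 *:
      (row xl (firstcols hk V) *m diag_mx (firstentries hk sigma) *m invmx D *m Rm) in
  forall (gV : 'I_NV -> 'rV[R]_k) (gL : 'I_NL -> 'rV[R]_k),
    L_SCL P fV fL <= L_SCL P gV gL.
Proof.
move=> fV fL gV gL; rewrite !L_SCL_embed_mx //= svd.
have embed_fV : embed_mx (margV P) fV = firstcols hk U *m D *m Rm.
  by apply: embed_mx_rescaled => // xv; rewrite /fV !row_mul.
have embed_fL : embed_mx (margL P) fL =
    firstcols hk V *m diag_mx (firstentries hk sigma) *m invmx D *m Rm.
  by apply: embed_mx_rescaled => // xl; rewrite /fL !row_mul.
rewrite embed_fV embed_fL mulmx_diag_orthogonal_cancel // firstcols_diag_mul.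
have := truncated_svd_gain sigma U_orth V_orth k.
have := low_rank_gain_le U_orth V_orth sigma_ge0 sigma_noninc
  (embed_mx (margV P) gV) (embed_mx (margL P) gL) hk.
lra.
Qed.
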